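(* Let $\mathcal{P}$ be a finite nonempty set of stochastic trees and $L$ an LPTS with $k$ states such that $P \preceq L$ for every $P\in\mathcal{P}$. Then there is a partition $\Pi$ of $S_\mathcal{P}$, in which the start states of all trees in $\mathcal{P}$ lie in the same class, having at most $2^k$ classes, such that $\mathcal{P}/\Pi \preceq L$.
   Context: An LPTS is a tuple $\langle S,s^0,\alpha,\tau\rangle$ with finite state set $S$, start state $s^0$, finite action set $\alpha$, finite $\tau\subseteq S\times\alpha\times\mathrm{Dist}(S)$, where $\mathrm{Dist}(S)$ is the set of discrete probability distributions over $S$ (rational probabilities); write $s\xrightarrow{a}\mu$. A stochastic tree is an LPTS whose start state is in the support of no transition's distribution and every other state is in the support of exactly one transition's distribution. Strong simulation: for $\mu_1\in\mathrm{Dist}(S_1)$, $\mu_2\in\mathrm{Dist}(S_2)$, $R\subseteq S_1\times S_2$, $\mu_1\sqsubseteq_R\mu_2$ iff there is $w:S_1\times S_2\to\mathbb{Q}\cap[0,1]$ with $\sum_{s_2}w(s_1,s_2)=\mu_1(s_1)$, $\sum_{s_1}w(s_1,s_2)=\mu_2(s_2)$ and $w(s_1,s_2)>0\Rightarrow s_1Rs_2$; $R$ is a strong simulation iff $s_1Rs_2$ and $s_1\xrightarrow{a}\mu_1$ imply some $s_2\xrightarrow{a}\mu_2$ with $\mu_1\sqsubseteq_R\mu_2$; $L_1\preceq L_2$ iff a strong simulation relates the start states. $S_\mathcal{P}$ is the (disjoint) union of the state sets of the trees in $\mathcal{P}$. For a partition $\Pi$ of $S_\mathcal{P}$ with classes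 $E_\Pi$ and class $[s]$ of $s$ (start states all in one class), the quotient $\mathcal{P}/\Pi$ is the LPTS with states $E_\Pi$, start state the common class of the start states, actions $\bigcup_{P\in\mathcal{P}}\alpha_P$, and a transition $e\xrightarrow{a}\mu$ iff some tree $P\in\mathcal{P}$ has a transition $s\xrightarrow{a}\mu_p$ with $[s]=e$ and $\mu(e')=\sum_{s'\in e'}\mu_p(s')$ for all $e'\in E_\Pi$. *)

From HB Require Import structures.
From mathcomp Require Import all_boot all_order all_algebra.
Set Implicit Arguments. Unset Strict Implicit. Unset Printing Implicit Defensive.
Import Order.TTheory GRing.Theory Num.Theory.
Local Open Scope ring_scope.

(* All LPTSs draw their action labels from a common finite universe [A];
   the action set alpha of an LPTS is a finite subset of [A]. *)
Record lpts (A : finType) := LPTS {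
  st : finType;
  start : st;
  alpha : {set A};
  trans : seq (st * A * {ffun st -> rat})
}.

Definition is_dist (S : finType) (mu : {ffun S -> rat}) : Prop :=
  (forall s, 0 <= mu s) /\ \sum_s mu s = 1.

Definition wf_lpts (A : finType) (L : lpts A) : Prop :=
  forall t, t \in trans L -> t.1.2 \in alpha L /\ is_dist t.2.

(* stochastic tree: the start state is in the support of no transition's
   distribution, every other state is in the support of exactly one
   transition's distribution (transitions counted as a set: undup). *)
Definition stochastic_tree (A : finType) (L : lpts A) : Prop :=
  (forall t, t \in trans L -> ~ (0 < t.2 (start L))) /\
  (forall s, s != start L ->
     count (fun t : st L * A * {ffun st L -> rat} => 0 < t.2 s)
           (undup (trans L)) = 1%N).

Definition lift_rel (S1 S2 : finType) (R : S1 -> S2 -> Prop)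
    (mu1 : {ffun S1 -> rat}) (mu2 : {ffun S2 -> rat}) : Prop :=
  exists w : S1 -> S2 -> rat,
    [/\ forall s1 s2, 0 <= w s1 s2 <= 1,
        forall s1, \sum_s2 w s1 s2 = mu1 s1,
        forall s2, \sum_s1 w s1 s2 = mu2 s2 &
        forall s1 s2, 0 < w s1 s2 -> R s1 s2].

Definition strong_sim (A : finType) (L1 L2 : lpts A)
    (R : st L1 -> st L2 -> Prop) : Prop :=
  forall s1 s2, R s1 s2 ->
  forall a mu1, (s1, a, mu1) \in trans L1 ->
  exists2 mu2, (s2, a, mu2) \in trans L2 & lift_rel R mu1 mu2.

Definition simulated (A : finType) (L1 L2 : lpts A) : Prop :=
  exists R : st L1 -> st L2 -> Prop, strong_sim R /\ R (start L1) (start L2).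

Definition SP (A I : finType) (P : I -> lpts A) : finType :=
  {i : I & st (P i)}.

Definition inSP (A I : finType) (P : I -> lpts A) (i : I) (s : st (P i))
  : SP P := Tagged (fun j => st (P j)) s.

Lemma pblock_in (T : finType) (Pi : {set {set T}})
  (HPi : partition Pi [set: T]) (x : T) : pblock Pi x \in Pi.
Proof.
apply: pblock_mem; case/and3P: HPi => /eqP -> _ _; exact: in_setT.
Qed.

Definition qstate (T : finType) (Pi : {set {set T}}) : finType :=
  {e : {set T} | e \in Pi}.

Definition cls (T : finType) (Pi : {set {set T}})
  (HPi : partition Pi [set: T]) (x : T) : qstate Pi :=
  exist (fun e => e \in Pi) (pblock Pi x) (pblock_in HPi x).

Definition qdist (A I : finType) (P : I -> lpts A) (Pi : {set {set SP P}})
  (i : I) (mu : {ffun st (P i) -> rat}) : {ffun qstate Pi -> rat} :=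
  [ffun e : qstate Pi => \sum_(s : st (P i) | inSP s \in val e) mu s].

(* the quotient P/Pi; its start state is the class of the start state of
   the tree P i0 (all start states lie in one class in the theorem). *)
Definition quotient (A I : finType) (P : I -> lpts A) (i0 : I)
  (Pi : {set {set SP P}}) (HPi : partition Pi [set: SP P]) : lpts A :=
  @LPTS A (qstate Pi) (cls HPi (inSP (start (P i0))))
    (\bigcup_(i : I) alpha (P i))
    (undup (flatten [seq [seq (cls HPi (inSP t.1.1), t.1.2, qdist Pi t.2)
                          | t <- trans (P i)] | i <- enum I])).

From HB Require Import structures.
From mathcomp Require Import all_boot all_order all_algebra.
From mathcomp Require Import boolp.
Set Implicit Arguments. Unset Strict Implicit. Unset Printing Implicit Defensive.
Import Order.TTheory GRing.Theory Num.Theory.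

(* Similarity is the largest strong simulation.  Collapse the states of the
   trees according to the set of states of L similar to them, except that all
   start states get the intersection of the similarity sets of the start
   states; there are at most 2^k such sets.  Relating a class to the states of
   L lying in its common set is a strong simulation on the quotient: a tree
   transition is matched in L, and its coupling, summed over the classes,
   couples the quotient distribution with the same distribution of L.  Start
   states never carry probability mass, so each class reached with positive
   probability is keyed by a full similarity set. *)

Definition similar (A : finType) (L1 L2 : lpts A) (s1 : st L1) (s2 : st L2) :=
  exists R : st L1 -> st L2 -> Prop, strong_sim R /\ R s1 s2.

Lemma similar_strong_sim (A : finType) (L1 L2 : lpts A) :
  strong_sim (@similar A L1 L2).
Proof.
move=> s1 s2 [R [simR Rs12]] a mu1 /(simR _ _ Rs12) [mu2 tr2 [w [w01 w1 w2 wR]]].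
exists mu2 => //; exists w; split=> // x y /wR Rxy; by exists R.
Qed.

Lemma lift_rel_sub (S1 S2 : finType) (R R' : S1 -> S2 -> Prop) mu1 mu2 :
  (forall s1 s2, R s1 s2 -> R' s1 s2) -> lift_rel R mu1 mu2 -> lift_rel R' mu1 mu2.
Proof. by move=> subRR' [w [w01 w1 w2 wR]]; exists w; split=> // s1 s2 /wR /subRR'. Qed.

Lemma card_preim_partition (T rT : finType) (f : T -> rT) (D : {set T}) :
  #|preim_partition f D| <= #|rT|.
Proof.
have -> : preim_partition f D = (fun K => [set y in D | K == f y]) @: (f @: D).
  by rewrite -imset_comp.
exact: leq_trans (leq_imset_card _ _) (max_card _).
Qed.

Lemma card_set_of (T : finType) : #|{set T}| = 2 ^ #|T|.
Proof. by rewrite -[LHS]cardsT -powersetT card_powerset cardsT. Qed.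

Section QuotientDistribution.
Local Open Scope ring_scope.

Variables (A I : finType) (P : I -> lpts A) (Pi : {set {set SP P}}).
Hypothesis partPi : partition Pi [set: SP P].

Lemma sum_over_classes i (f : st (P i) -> rat) :
  \sum_(e : qstate Pi) \sum_(s | inSP s \in val e) f s = \sum_s f s.
Proof.
have [/eqP coverPi trivPi _] := and3P partPi.
rewrite (exchange_big_dep predT) //=; apply: eq_bigr => s _.
rewrite (big_pred1 (cls partPi (inSP s))) // => e /=.
apply/idP/eqP => [se | ->]; last by rewrite /= mem_pblock coverPi inE.
by apply: val_inj; rewrite /= (def_pblock trivPi (valP e) se).
Qed.

Lemma lift_rel_qdist (S : finType) i (R : st (P i) -> S -> Prop)
    (mu : {ffun st (P i) -> rat}) (nu : {ffun S -> rat}) :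
  is_dist nu -> lift_rel R mu nu ->
  lift_rel (fun (e : qstate Pi) t => exists s, [/\ inSP s \in val e, 0 < mu s & R s t])
    (qdist Pi mu) nu.
Proof.
move=> [nu_ge0 nu_sum1] [w [w01 w_mu w_nu wR]].
have w_ge0 s t : 0 <= w s t by case/andP: (w01 s t).
have term_le_sum (T : finType) (f : T -> rat) (p : pred T) x :
    (forall y, 0 <= f y) -> p x -> f x <= \sum_(y | p y) f y.
  by move=> f_ge0 px; rewrite (bigD1 x) //= lerDl sumr_ge0.
pose W (e : qstate Pi) t := \sum_(s | inSP s \in val e) w s t.
exists W; split => [e t | e | t | e t].
- rewrite sumr_ge0 //=; apply: le_trans (_ : \sum_s w s t <= 1).
    by rewrite [leRHS](bigID (fun s => inSP s \in val e)) lerDl sumr_ge0.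
  by rewrite w_nu -nu_sum1 (term_le_sum _ _ predT).
- by rewrite /W exchange_big ffunE; apply: eq_bigr => s _; exact: w_mu.
- by rewrite /W sum_over_classes w_nu.
- move=> /lt0r_neq0 /eqP W_neq0.
  have [s /andP [se w_pos]] := psumr_neq0P (fun s _ => w_ge0 s t) W_neq0.
  exists s; split; [done | | exact: wR].
  by apply: lt_le_trans w_pos _; rewrite -w_mu (term_le_sum _ _ predT).
Qed.

End QuotientDistribution.

Section SimilarityPartition.

Variables (A I : finType) (P : I -> lpts A) (L : lpts A).

Definition sim_set (x : SP P) : {set st L} :=
  [set t | `[< similar (tagged x) t >]].

Definition start_sim_set : {set st L} :=
  \bigcap_(i : I) sim_set (inSP (start (P i))).

Definition sim_key (x : SP P) : {set st L} :=
  if tagged x == start (P (tag x)) then start_sim_set else sim_set x.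

Definition sim_partition := preim_partition sim_key [set: SP P].

Lemma sim_partitionP : partition sim_partition [set: SP P].
Proof. exact: preim_partitionP. Qed.

Lemma mem_pblock_sim_partition x y :
  (y \in pblock sim_partition x) = (sim_key x == sim_key y).
Proof.
apply: pblock_equivalence_partition; rewrite ?inE //.
by move=> a b c _ _ _; split=> // /eqP ->.
Qed.

Lemma sim_key_class (e : qstate sim_partition) x y :
  x \in val e -> y \in val e -> sim_key x = sim_key y.
Proof.
have [_ trivPi _] := and3P sim_partitionP.
move=> xe ye; apply/eqP; rewrite -mem_pblock_sim_partition.
by rewrite (def_pblock trivPi (valP e) xe).
Qed.

Lemma pblock_sim_partition_start i j :
  pblock sim_partition (inSP (start (P i))) =
  pblock sim_partition (inSP (start (P j))).
Proof. by apply/setP => y; rewrite !mem_pblock_sim_partition /sim_key /= !eqxx. Qed.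

Lemma card_sim_partition : #|sim_partition| <= 2 ^ #|st L|.
Proof. by rewrite -card_set_of card_preim_partition. Qed.

Lemma sim_key_similar x t : t \in sim_key x -> similar (tagged x) t.
Proof.
rewrite /sim_key; case: eqP => [-> | _]; last by rewrite inE => /asboolP.
by move/bigcapP => /(_ (tag x) isT); rewrite inE => /asboolP.
Qed.

Lemma sim_key_non_start i (s : st (P i)) :
  s != start (P i) -> sim_key (inSP s) = sim_set (inSP s).
Proof. by rewrite /sim_key /= => /negbTE ->. Qed.

Hypothesis wfL : wf_lpts L.
Hypothesis start_unreached :
  forall i t, t \in trans (P i) -> ~ (0 < t.2 (start (P i)))%R.
Hypothesis simP : forall i, simulated (P i) L.

Definition class_sim (e : qstate sim_partition) (t : st L) : Prop :=
  forall x, x \in val e -> t \in sim_key x.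

Lemma class_sim_strong_sim i0 :
  strong_sim (L1 := quotient i0 sim_partitionP) class_sim.
Proof.
have [/eqP coverPi _ _] := and3P sim_partitionP.
move=> e t e_t a mu /=; rewrite mem_undup => /flattenP [_ /mapP [i _ ->]].
case/mapP => [[[s b] mus]] tr_s [E_e -> ->]; subst e.
have s_t : similar s t.
  by apply: (sim_key_similar (x := inSP s)); rewrite e_t //= mem_pblock coverPi inE.
have [nu tr_t lift_s] := similar_strong_sim s_t tr_s.
have [_ nu_dist] := wfL tr_t.
exists nu => //; apply: lift_rel_sub (lift_rel_qdist sim_partitionP nu_dist lift_s).
move=> e' t' [s' [s'e' mus_pos s'_t']] x xe'.
have s'_ns : s' != start (P i).
  by apply/eqP => s'_start; apply: (start_unreached tr_s); rewrite /= -s'_start.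
by rewrite -(sim_key_class s'e' xe') sim_key_non_start // inE; apply/asboolP.
Qed.

Lemma quotient_sim_partition_simulated i0 :
  simulated (quotient i0 sim_partitionP) L.
Proof.
exists class_sim; split; first exact: class_sim_strong_sim.
move=> x /=; rewrite mem_pblock_sim_partition => /eqP <-.
rewrite /sim_key /= eqxx; apply/bigcapP => i _; rewrite inE; apply/asboolP.
exact: simP.
Qed.

End SimilarityPartition.

Theorem lemma7 (A I : finType) (P : I -> lpts A) (i0 : I) (L : lpts A)
  (k : nat) :
  (forall i, wf_lpts (P i)) ->
  (forall i, stochastic_tree (P i)) ->
  wf_lpts L ->
  #|st L| = k ->
  (forall i, simulated (P i) L) ->
  exists Pi : {set {set SP P}}, exists HPi : partition Pi [set: SP P],
    [/\ forall i j, pblock Pi (inSP (start (P i))) = pblock Pi (inSP (start (P j))),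
        #|Pi| <= 2 ^ k
      & simulated (quotient i0 HPi) L].
Proof.
move=> _ treeP wfL <- simP.
have start_unreached i := (treeP i).1.
exists (sim_partition P L), (sim_partitionP P L); split.
- exact: pblock_sim_partition_start.
- exact: card_sim_partition.
- exact: quotient_sim_partition_simulated wfL start_unreached simP i0.
Qed.
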